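(* Let $k\ge 3$ be an integer and let $\varepsilon\in(0,1)$ satisfy $1/\varepsilon > k$. Then \[ d(k,\varepsilon) \ \le\ \frac{1}{2}\left(\frac{\log\big(r_k(\lfloor 1/\varepsilon+1\rfloor)+1\big)}{\log\big(\lfloor 1/\varepsilon+1\rfloor\big)}+1\right). \]
   Context: A $k$-term arithmetic progression ($k$AP) is a set $P=\{x, x+\lambda, \dots, x+(k-1)\lambda\}\subset\mathbb{R}$ with $\lambda>0$, called the gap length of $P$. For $N\in\mathbb{N}$, $r_k(N)$ denotes the maximal cardinality of a subset $A\subseteq\{1,\dots,N\}$ that contains no $k$AP. Given $\varepsilon\in(0,1)$, a set $E\subset\mathbb{R}$ is said to $\varepsilon$-avoid $k$APs if for every $k$AP $P$ with gap length $\lambda$ one has $\sup_{p\in P}\inf_{x\in E}|x-p|\ \ge\ \varepsilon\lambda$. Define $d(k,\varepsilon)=\sup\{\dim_H(E): E\subset\mathbb{R} \text{ bounded and } E \ \varepsilon\text{-avoids } k\text{APs}\}$, where $\dim_H$ is Hausdorff dimension. *)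

From Stdlib Require Import Reals Lra Lia ZArith List Classical ClassicalEpsilon.
Open Scope R_scope.

(* A (finite) set of naturals, given as a duplicate-free list, contains a kAP
   x, x+l, ..., x+(k-1)l with gap l > 0. (A kAP in R contained in a set of
   integers necessarily has integer start and integer gap.) *)
Definition contains_kAP (k : nat) (A : list nat) : Prop :=
  exists x l : nat, (0 < l)%nat /\ forall i : nat, (i < k)%nat -> In (x + i * l)%nat A.

Definition kAP_free_subset (k N : nat) (A : list nat) : Prop :=
  NoDup A /\ (forall a, In a A -> (1 <= a <= N)%nat) /\ ~ contains_kAP k A.

Definition is_rk (k N n : nat) : Prop :=
  (exists A, kAP_free_subset k N A /\ length A = n) /\
  (forall A, kAP_free_subset k N A -> (length A <= n)%nat).

(* r_k(N) (the maximum exists since there are finitely many subsets) *)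
Definition r_k (k N : nat) : nat :=
  epsilon (inhabits 0%nat) (fun n => is_rk k N n).

Definition bounded (E : R -> Prop) : Prop :=
  exists M, forall x, E x -> Rabs x <= M.

(* E eps-avoids kAPs: for every kAP P = {x, x+l, ..., x+(k-1)l}, l > 0,
   sup_{p in P} inf_{y in E} |y - p| >= eps * l.  Since P is finite the sup is a
   max, and inf_{y in E} |y-p| >= c means |y-p| >= c for all y in E. *)
Definition eps_avoids_kAPs (k : nat) (eps : R) (E : R -> Prop) : Prop :=
  forall x l : R, 0 < l ->
    exists i : nat, (i < k)%nat /\
      forall y, E y -> Rabs (y - (x + INR i * l)) >= eps * l.

Definition dist_set (U : R -> Prop) (r : R) : Prop :=
  exists x y, U x /\ U y /\ r = Rabs (x - y).

(* diameter: sup of pairwise distances; 0 for the empty set (and, by an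
   irrelevant convention, for unbounded sets, which never occur below since
   the covering sets are required to have all distances <= delta). *)
Definition diam (U : R -> Prop) : R :=
  epsilon (inhabits 0)
    (fun d => is_lub (dist_set U) d \/ ((~ exists d', is_lub (dist_set U) d') /\ d = 0)).

(* diam(U)^s with the convention 0^s = 0 (s > 0) *)
Definition diam_pow (U : R -> Prop) (s : R) : R :=
  if Rle_dec (diam U) 0 then 0 else Rpower (diam U) s.

(* H^s(E) = 0, written out: for every delta > 0, H^s_delta(E) = 0, i.e. for
   every eta > 0 there is a countable delta-cover (U_n) of E with
   sum_n diam(U_n)^s < eta. *)
Definition Hausdorff_null (s : R) (E : R -> Prop) : Prop :=
  forall delta eta : R, 0 < delta -> 0 < eta ->
    exists U : nat -> (R -> Prop),
      (forall x, E x -> exists n, U n x) /\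
      (forall n x y, U n x -> U n y -> Rabs (x - y) <= delta) /\
      (forall n, diam (U n) <= delta) /\
      exists l, infinite_sum (fun n => diam_pow (U n) s) l /\ l < eta.

Definition is_glb (S : R -> Prop) (m : R) : Prop :=
  (forall s, S s -> m <= s) /\ (forall b, (forall s, S s -> b <= s) -> b <= m).

(* Hausdorff dimension: dim_H E = inf { s > 0 : H^s(E) = 0 }
   (for subsets of R this set is nonempty and bounded below, so the inf exists) *)
Definition dimH (E : R -> Prop) : R :=
  epsilon (inhabits 0) (fun d => is_glb (fun s => 0 < s /\ Hausdorff_null s E) d).

Definition dim_set (k : nat) (eps : R) (t : R) : Prop :=
  exists E : R -> Prop, bounded E /\ eps_avoids_kAPs k eps E /\ t = dimH E.

Definition d_k_eps (k : nat) (eps : R) : R :=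
  epsilon (inhabits 0) (fun d => is_lub (dim_set k eps) d).

(* If [1 < eps * N], cut an interval of length L into N blocks of length L/N and each block
   into N cells of length L/N^2.  For a fixed cell position j, the blocks whose j-th cell meets
   E form a kAP-free subset of {1,...,N}: a kAP of blocks with gap l gives a real kAP of cells
   with gap l L/N, and every point of E in those cells lies within L/N^2 < eps l L/N of it.
   So at most N r_k(N) cells meet E.  Iterating, E is covered by (N r)^n intervals of length
   L N^(-2n), and for t = (ln(r+1)/ln N + 1)/2 the sum of their t-th powers is
   at most L^t (r/(r+1))^n, which tends to 0. *)

From Pilot Require Import Defs.
From Stdlib Require Import Reals ZArith.
From Stdlib Require Import Lra Lia List Classical ClassicalEpsilon.
Open Scope R_scope.

Lemma ln_nonneg x : 1 <= x -> 0 <= ln x.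
Proof.
  intros [Hx | <-]; [|rewrite ln_1; lra].
  rewrite <- ln_1; left; apply ln_increasing; lra.
Qed.

Lemma Rpower_pos x y : 0 < Rpower x y.
Proof. apply exp_pos. Qed.

Lemma Rpower_geometric L q s n : 0 < L -> 0 < q ->
  Rpower (L * q ^ n) s = Rpower L s * Rpower q s ^ n.
Proof.
  intros HL Hq.
  rewrite <- Rpower_mult_distr by (auto; apply pow_lt; lra).
  rewrite <- !Rpower_pow by (auto; apply Rpower_pos).
  rewrite !Rpower_mult, (Rmult_comm (INR n)), Rmult_comm; reflexivity.
Qed.

Lemma diam_le_of_dist_le (U : R -> Prop) (D : R) : 0 <= D ->
  (forall x y, U x -> U y -> Rabs (x - y) <= D) -> diam U <= D.
Proof.
  intros HD HU. unfold diam.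
  assert (Hex : exists d, is_lub (dist_set U) d \/
     ((~ exists d', is_lub (dist_set U) d') /\ d = 0)).
  { destruct (classic (exists d', is_lub (dist_set U) d')) as [[d' Hd'] | Hn].
    - exists d'; left; exact Hd'.
    - exists 0; right; split; auto. }
  destruct (epsilon_spec (inhabits 0) _ Hex) as [Hlub | [_ ->]]; [|exact HD].
  apply Hlub. intros r (x & y & Hx & Hy & ->). auto.
Qed.

Lemma diam_pow_nonneg U s : 0 <= diam_pow U s.
Proof.
  unfold diam_pow. destruct (Rle_dec (diam U) 0); [lra | left; apply Rpower_pos].
Qed.

Lemma diam_pow_le U s D : 0 < D -> 0 <= s -> diam U <= D -> diam_pow U s <= Rpower D s.
Proof.
  intros HD Hs Hd. unfold diam_pow. destruct (Rle_dec (diam U) 0).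
  - left; apply Rpower_pos.
  - apply Rle_Rpower_l; lra.
Qed.

Lemma diam_pow_empty U s : (forall x, ~ U x) -> diam_pow U s = 0.
Proof.
  intros H. unfold diam_pow. destruct (Rle_dec (diam U) 0) as [|Hpos]; auto.
  exfalso; apply Hpos, diam_le_of_dist_le; [lra|].
  intros x y Hx; contradiction (H x Hx).
Qed.

Lemma infinite_sum_eventually_zero f K : (forall n, (K <= n)%nat -> f n = 0) ->
  infinite_sum f (sum_f_R0 f K).
Proof.
  intros H e He. exists K. intros n Hn. unfold Rdist.
  replace (sum_f_R0 f n) with (sum_f_R0 f K); [rewrite Rminus_diag, Rabs_R0; lra|].
  induction Hn as [|n Hn IH]; auto. simpl. rewrite H by lia. lra.
Qed.

Lemma sum_f_R0_le_mul f K c :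
  (forall n, (n < K)%nat -> f n <= c) -> f K = 0 -> sum_f_R0 f K <= INR K * c.
Proof.
  intros Hc HK. destruct K as [|K]; [simpl; lra|].
  simpl sum_f_R0. rewrite HK, Rplus_0_r, Rmult_comm, <- sum_cte.
  apply sum_Rle. intros n Hn. apply Hc. lia.
Qed.

Definition interval_cover (E : R -> Prop) (h : R) (cs : list R) : Prop :=
  forall y, E y -> exists c, In c cs /\ c <= y <= c + h.

Lemma Hausdorff_null_of_interval_covers s E : 0 <= s ->
  (forall delta eta, 0 < delta -> 0 < eta -> exists h cs,
     0 < h <= delta /\ interval_cover E h cs /\ INR (length cs) * Rpower h s < eta) ->
  Hausdorff_null s E.
Proof.
  intros Hs Hcov delta eta Hd He.
  destruct (Hcov delta eta Hd He) as (h & cs & Hh & HE & Hsum).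
  set (U := fun i x => (i < length cs)%nat /\ nth i cs 0 <= x <= nth i cs 0 + h).
  assert (HUd : forall i x y, U i x -> U i y -> Rabs (x - y) <= h).
  { intros i x y [_ Hx] [_ Hy]. unfold Rabs; destruct Rcase_abs; lra. }
  assert (HUdiam : forall i, diam (U i) <= h)
    by (intros; apply diam_le_of_dist_le; [lra | apply HUd]).
  assert (HUempty : forall i, (length cs <= i)%nat -> diam_pow (U i) s = 0).
  { intros i Hi. apply diam_pow_empty. intros x [Hx _]. lia. }
  exists U. split; [|split; [|split]].
  - intros y Hy. destruct (HE y Hy) as [c [Hc Hyc]].
    destruct (In_nth cs c 0 Hc) as [i [Hi <-]]. exists i. split; auto.
  - intros i x y Hx Hy. specialize (HUd i x y Hx Hy). lra.
  - intros i. specialize (HUdiam i). lra.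
  - exists (sum_f_R0 (fun i => diam_pow (U i) s) (length cs)). split.
    + apply infinite_sum_eventually_zero, HUempty.
    + eapply Rle_lt_trans; [|exact Hsum].
      apply sum_f_R0_le_mul; [|apply HUempty; lia].
      intros i _. apply diam_pow_le; [lra | lra | apply HUdiam].
Qed.

Lemma Hausdorff_null_of_geometric_covers s E (K : nat) L q :
  0 <= s -> 0 < L -> 0 < q < 1 -> INR K * Rpower q s < 1 ->
  (forall n, exists cs, (length cs <= K ^ n)%nat /\ interval_cover E (L * q ^ n) cs) ->
  Hausdorff_null s E.
Proof.
  intros Hs HL Hq Hrate Hcov.
  apply Hausdorff_null_of_interval_covers; auto. intros delta eta Hd He.
  set (rho := INR K * Rpower q s).
  assert (Hrho1 : rho < 1) by exact Hrate.
  assert (Hrho : 0 <= rho)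
    by (apply Rmult_le_pos; [apply pos_INR | left; apply Rpower_pos]).
  assert (HLs := Rpower_pos L s).
  destruct (pow_lt_1_zero rho ltac:(rewrite Rabs_pos_eq; lra) (eta / Rpower L s)
    ltac:(apply Rdiv_lt_0_compat; lra)) as [n1 Hn1].
  destruct (pow_lt_1_zero q ltac:(rewrite Rabs_pos_eq; lra) (delta / L)
    ltac:(apply Rdiv_lt_0_compat; lra)) as [n2 Hn2].
  set (n := Nat.max n1 n2).
  specialize (Hn1 n ltac:(unfold n; lia)). specialize (Hn2 n ltac:(unfold n; lia)).
  rewrite Rabs_pos_eq in Hn1, Hn2 by (apply pow_le; lra).
  destruct (Hcov n) as [cs [Hlen HE]].
  assert (Hqn : 0 < q ^ n) by (apply pow_lt; lra).
  exists (L * q ^ n), cs. split; [|split; auto].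
  - split; [nra|]. apply (Rmult_lt_compat_l L) in Hn2; auto.
    replace (L * (delta / L)) with delta in Hn2 by (field; lra). lra.
  - assert (HlenR : INR (length cs) <= INR K ^ n) by (rewrite <- pow_INR; apply le_INR; auto).
    assert (Hpow : INR K ^ n * Rpower (L * q ^ n) s = Rpower L s * rho ^ n).
    { rewrite Rpower_geometric by lra. unfold rho. rewrite Rpow_mult_distr. ring. }
    apply (Rmult_lt_compat_l (Rpower L s)) in Hn1; auto.
    replace (Rpower L s * (eta / Rpower L s)) with eta in Hn1 by (field; lra).
    pose proof (Rpower_pos (L * q ^ n) s). nra.
Qed.

Lemma dimH_le_of_Hausdorff_null E t : 0 < t -> Hausdorff_null t E -> dimH E <= t.
Proof.
  intros Ht Hn.
  set (S := fun s => 0 < s /\ Hausdorff_null s E).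
  destruct (completeness (fun x => S (- x))) as [m [Hm1 Hm2]].
  - exists 0. intros x [Hx _]. lra.
  - exists (- t). unfold S. rewrite Ropp_involutive. auto.
  - assert (Hglb : is_glb S (- m)).
    { split.
      + intros s Hs. assert (- s <= m) by (apply Hm1; rewrite Ropp_involutive; auto). lra.
      + intros b Hb. assert (m <= - b); [|lra].
        apply Hm2. intros x Hx. specialize (Hb _ Hx). lra. }
    unfold dimH. apply (proj1 (epsilon_spec (inhabits 0) _ (ex_intro _ _ Hglb))).
    unfold S; auto.
Qed.

Lemma d_k_eps_le k eps t : (1 <= k)%nat ->
  (forall E, Defs.bounded E -> eps_avoids_kAPs k eps E -> dimH E <= t) -> d_k_eps k eps <= t.
Proof.
  intros Hk H.
  destruct (completeness (dim_set k eps)) as [m Hm].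
  - exists t. intros x (E & HB & HA & ->). auto.
  - exists (dimH (fun _ => False)), (fun _ => False). split; [|split; auto].
    + exists 0. intros x [].
    + intros x l Hl. exists 0%nat. split; auto. intros y [].
  - unfold d_k_eps. apply (proj2 (epsilon_spec (inhabits 0) _ (ex_intro _ _ Hm))).
    intros x (E & HB & HA & ->). auto.
Qed.

Lemma exists_max_nat (P : nat -> Prop) B : (exists n, P n) ->
  (forall n, P n -> (n <= B)%nat) -> exists n, P n /\ forall m, P m -> (m <= n)%nat.
Proof.
  intros [n0 Hn0] HB. apply NNPP. intros Hno.
  assert (Hnext : forall n, P n -> exists m, P m /\ (n < m)%nat).
  { intros n Hn. apply NNPP. intros Hc. apply Hno. exists n. split; auto.
    intros m Hm. destruct (Nat.le_gt_cases m n); auto. exfalso; eauto. }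
  assert (Hlarge : forall j, exists n, P n /\ (j <= n)%nat).
  { induction j as [|j [n [Hn Hjn]]]; [exists n0; split; auto; lia|].
    destruct (Hnext n Hn) as [m [Hm Hnm]]. exists m; split; auto; lia. }
  destruct (Hlarge (S B)) as [n [Hn HBn]]. specialize (HB n Hn). lia.
Qed.

Lemma is_rk_r_k k N : (1 <= k)%nat -> is_rk k N (r_k k N).
Proof.
  intros Hk. unfold r_k. apply epsilon_spec.
  destruct (exists_max_nat (fun n => exists A, kAP_free_subset k N A /\ length A = n) N)
    as [n [[A [HA HAl]] Hmax]].
  - exists 0%nat, nil. split; [|reflexivity].
    split; [constructor | split; [intros a [] |]].
    intros (x & l & _ & Hin). exact (Hin 0%nat Hk).
  - intros n (A & (HD & Hr & _) & <-). rewrite <- (length_seq N 1).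
    apply NoDup_incl_length; auto. intros a Ha. apply in_seq. specialize (Hr a Ha). lia.
  - exists n. split; [exists A; auto|]. intros B HB. apply Hmax. exists B; auto.
Qed.

Lemma exists_grid_cell (a h y : R) (K : nat) : 0 < h -> (1 <= K)%nat ->
  a <= y <= a + INR K * h ->
  exists q, (q < K)%nat /\ a + INR q * h <= y <= a + INR q * h + h.
Proof.
  intros Hh HK. induction K as [|K IH]; [lia|]. intros Hy.
  destruct (Nat.eq_dec K 0) as [->|HK0].
  - exists 0%nat. simpl in *. split; [lia | lra].
  - destruct (Rle_dec y (a + INR K * h)).
    + destruct IH as [q [Hq Hq']]; [lia | lra |]. exists q; split; [lia | lra].
    + exists K. rewrite S_INR in Hy. split; [lia | lra].
Qed.

(* Left end of cell j (of length L/N^2) in block m (of length L/N) of [b, b + L]; blocks are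
   numbered 1..N so that sets of blocks are subsets of {1,...,N}. *)
Definition cell (b L : R) (N m j : nat) : R :=
  b + (INR m - 1) * (L / INR N) + INR j * (L / (INR N * INR N)).

Definition meets (E : R -> Prop) (c h : R) : Prop := exists y, E y /\ c <= y <= c + h.

Definition meetsb (E : R -> Prop) (b L : R) (N j m : nat) : bool :=
  if excluded_middle_informative (meets E (cell b L N m j) (L / (INR N * INR N)))
  then true else false.

Definition blocks_meeting (E : R -> Prop) (b L : R) (N j : nat) : list nat :=
  filter (meetsb E b L N j) (seq 1 N).

Definition refinement (E : R -> Prop) (N : nat) (b L : R) : list R :=
  flat_map (fun j => map (fun m => cell b L N m j) (blocks_meeting E b L N j)) (seq 0 N).

Lemma refinement_cover E N b L : 0 < L -> (1 <= N)%nat ->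
  interval_cover (fun y => E y /\ b <= y <= b + L) (L / (INR N * INR N)) (refinement E N b L).
Proof.
  intros HL HN y [Hy Hby].
  assert (HNr : 0 < INR N) by (apply lt_0_INR; lia).
  set (h := L / (INR N * INR N)).
  assert (Hh : 0 < h) by (apply Rdiv_lt_0_compat; nra).
  destruct (exists_grid_cell b h y (N * N) Hh ltac:(nia)) as [q [Hq Hqy]].
  { rewrite mult_INR. unfold h.
    replace (b + INR N * INR N * (L / (INR N * INR N))) with (b + L) by (field; lra). lra. }
  assert (Hqd : (q / N < N)%nat) by (apply Nat.Div0.div_lt_upper_bound; lia).
  assert (Hqm : (q mod N < N)%nat) by (apply Nat.mod_upper_bound; lia).
  assert (Hc : cell b L N (S (q / N)) (q mod N) = b + INR q * h).
  { unfold cell, h. rewrite (Nat.div_mod_eq q N) at 3.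
    rewrite plus_INR, mult_INR, S_INR. field. lra. }
  exists (cell b L N (S (q / N)) (q mod N)). rewrite Hc. split; [|lra].
  rewrite <- Hc. apply in_flat_map. exists (q mod N). split; [apply in_seq; lia|].
  apply (in_map (fun m => cell b L N m (q mod N))), filter_In.
  split; [apply in_seq; lia|].
  unfold meetsb. destruct excluded_middle_informative as [|Hn]; auto.
  exfalso. apply Hn. exists y. fold h. rewrite Hc. auto.
Qed.

Lemma length_flat_map_le {A B} (f : A -> list B) (l : list A) (K : nat) :
  (forall x, In x l -> (length (f x) <= K)%nat) -> (length (flat_map f l) <= length l * K)%nat.
Proof.
  induction l as [|x l IH]; intros H; simpl; auto.
  rewrite length_app.
  assert (length (flat_map f l) <= length l * K)%nat by (apply IH; intros; apply H; simpl; auto).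
  specialize (H x (or_introl eq_refl)). lia.
Qed.

Section KAPAvoidingRefinement.

Variables (k N : nat) (eps : R) (E : R -> Prop).
Hypothesis HN : (1 <= N)%nat.
Hypothesis HepsN : 1 < eps * INR N.
Hypothesis Havoid : eps_avoids_kAPs k eps E.

Lemma blocks_meeting_kAP_free b L j : 0 < L -> kAP_free_subset k N (blocks_meeting E b L N j).
Proof.
  intros HL.
  assert (HNr : 0 < INR N) by (apply lt_0_INR; lia).
  assert (Hblocks : forall m, In m (blocks_meeting E b L N j) -> (1 <= m <= N)%nat).
  { intros m Hm. apply filter_In in Hm as [Hm _]. apply in_seq in Hm. lia. }
  split; [apply NoDup_filter, seq_NoDup | split; auto].
  intros (x0 & l0 & Hl0 & Hin).
  set (w := L / INR N).
  assert (Hw : 0 < w) by (apply Rdiv_lt_0_compat; lra).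
  assert (Hgap : 0 < INR l0 * w) by (apply Rmult_lt_0_compat; auto; apply lt_0_INR; lia).
  destruct (Havoid (cell b L N x0 j) (INR l0 * w) Hgap) as [i [Hi Hfar]].
  specialize (Hin i Hi). apply filter_In in Hin as [_ Hmeet].
  unfold meetsb in Hmeet.
  destruct excluded_middle_informative as [[y [Hy Hyc]] |]; [|discriminate].
  specialize (Hfar y Hy).
  assert (Hcell : cell b L N (x0 + i * l0) j = cell b L N x0 j + INR i * (INR l0 * w))
    by (unfold cell, w; rewrite plus_INR, mult_INR; ring).
  assert (Hh : L / (INR N * INR N) = w * / INR N) by (unfold w; field; lra).
  rewrite Hcell, Hh in Hyc.
  assert (Hclose : Rabs (y - (cell b L N x0 j + INR i * (INR l0 * w))) <= w * / INR N)
    by (unfold Rabs; destruct Rcase_abs; lra).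
  assert (Hl1 : 1 <= INR l0) by (apply (le_INR 1); lia).
  assert (HinvN : / INR N < eps).
  { apply (Rmult_lt_reg_r (INR N)); [lra|]. rewrite Rinv_l by lra. lra. }
  assert (0 < / INR N) by (apply Rinv_0_lt_compat; lra).
  nra.
Qed.

Lemma refinement_length_le r b L : 0 < L -> is_rk k N r ->
  (length (refinement E N b L) <= N * r)%nat.
Proof.
  intros HL Hrk. unfold refinement. rewrite <- (length_seq N 0) at 2.
  apply length_flat_map_le. intros j _. rewrite length_map.
  apply (proj2 Hrk), blocks_meeting_kAP_free, HL.
Qed.

Lemma iterated_refinement_covers r a L : is_rk k N r -> 0 < L ->
  (forall y, E y -> a <= y <= a + L) ->
  forall n, exists cs, (length cs <= (N * r) ^ n)%nat /\
    interval_cover E (L * (/ (INR N * INR N)) ^ n) cs.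
Proof.
  intros Hrk HL HE.
  assert (HNr : 0 < INR N) by (apply lt_0_INR; lia).
  assert (Hq : 0 < / (INR N * INR N)) by (apply Rinv_0_lt_compat; nra).
  induction n as [|n [cs [Hlen Hcov]]].
  - exists (a :: nil). split; [simpl; lia|]. intros y Hy. exists a.
    specialize (HE y Hy). simpl. split; [auto | lra].
  - set (Ln := L * (/ (INR N * INR N)) ^ n).
    assert (HLn : 0 < Ln) by (apply Rmult_lt_0_compat; auto; apply pow_lt; auto).
    exists (flat_map (fun c => refinement E N c Ln) cs). split.
    + eapply Nat.le_trans; [apply length_flat_map_le; intros c _;
        apply (refinement_length_le r c Ln HLn Hrk)|].
      simpl Nat.pow. rewrite (Nat.mul_comm (N * r)). apply Nat.mul_le_mono_r, Hlen.
    + intros y Hy. destruct (Hcov y Hy) as [c [Hc Hyc]].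
      destruct (refinement_cover E N c Ln HLn HN y (conj Hy Hyc)) as [c' [Hc' Hyc']].
      exists c'. split; [apply in_flat_map; exists c; auto|].
      replace (L * (/ (INR N * INR N)) ^ S n) with (Ln / (INR N * INR N))
        by (unfold Ln; simpl; field; lra). exact Hyc'.
Qed.

End KAPAvoidingRefinement.

Lemma bounded_in_interval E : Defs.bounded E ->
  exists a L, 0 < L /\ forall y, E y -> a <= y <= a + L.
Proof.
  intros [M HM]. exists (- (Rabs M + 1)), (2 * (Rabs M + 1)).
  pose proof (Rabs_pos M). pose proof (Rle_abs M). split; [lra|].
  intros y Hy. specialize (HM y Hy). revert HM. unfold Rabs at 1.
  destruct Rcase_abs; intros; lra.
Qed.

Lemma refinement_rate_lt_1 N r : (2 <= N)%nat ->
  INR (N * r) * Rpower (/ (INR N * INR N)) (/ 2 * (ln (INR r + 1) / ln (INR N) + 1)) < 1.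
Proof.
  intros HN.
  assert (HNr : 2 <= INR N) by (apply (le_INR 2); lia).
  assert (HlnN : 0 < ln (INR N)) by (rewrite <- ln_1; apply ln_increasing; lra).
  pose proof (pos_INR r).
  assert (Hpow : Rpower (/ (INR N * INR N)) (/ 2 * (ln (INR r + 1) / ln (INR N) + 1))
                 = / ((INR r + 1) * INR N)).
  { unfold Rpower. rewrite ln_Rinv, ln_mult by nra.
    rewrite <- (exp_ln (/ ((INR r + 1) * INR N))) by (apply Rinv_0_lt_compat; nra).
    rewrite ln_Rinv, ln_mult by nra. f_equal. field. lra. }
  rewrite Hpow, mult_INR.
  apply (Rmult_lt_reg_r ((INR r + 1) * INR N)); [nra|].
  rewrite Rmult_assoc, Rinv_l by nra. nra.
Qed.

Lemma eps_avoiding_Hausdorff_null k eps E N r : (1 <= k)%nat -> (2 <= N)%nat ->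
  1 < eps * INR N -> is_rk k N r -> eps_avoids_kAPs k eps E -> Defs.bounded E ->
  Hausdorff_null (/ 2 * (ln (INR r + 1) / ln (INR N) + 1)) E.
Proof.
  intros Hk HN HepsN Hrk Hav HB.
  destruct (bounded_in_interval E HB) as (a & L & HL & HE).
  assert (HNr : 2 <= INR N) by (apply (le_INR 2); lia).
  assert (HlnN : 0 < ln (INR N)) by (rewrite <- ln_1; apply ln_increasing; lra).
  assert (Hlnr := ln_nonneg (INR r + 1) ltac:(pose proof (pos_INR r); lra)).
  apply (Hausdorff_null_of_geometric_covers _ _ (N * r) L (/ (INR N * INR N))); auto.
  - assert (0 <= ln (INR r + 1) / ln (INR N))
      by (apply Rmult_le_pos; [lra | left; apply Rinv_0_lt_compat, HlnN]). lra.
  - split; [apply Rinv_0_lt_compat; nra|].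
    apply (Rmult_lt_reg_r (INR N * INR N)); [nra|]. rewrite Rinv_l by nra. nra.
  - apply refinement_rate_lt_1, HN.
  - apply (iterated_refinement_covers k N eps E) with (a := a); auto; lia.
Qed.

Theorem theorem1p1 (k : nat) (eps : R) :
  (3 <= k)%nat -> 0 < eps < 1 -> 1 / eps > INR k ->
  let N := Z.to_nat (Int_part (1 / eps + 1)) in
  d_k_eps k eps <=
    / 2 * (ln (INR (r_k k N) + 1) / ln (INR N) + 1).
Proof.
  intros Hk Heps Hke N.
  destruct (base_Int_part (1 / eps + 1)) as [Hint1 Hint2].
  assert (HkR : 3 <= INR k) by (apply (le_INR 3) in Hk; simpl in Hk; lra).
  assert (HN : INR N = IZR (Int_part (1 / eps + 1))).
  { unfold N. rewrite INR_IZR_INZ, Z2Nat.id; auto. apply le_IZR. lra. }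
  assert (HepsN : 1 < eps * INR N).
  { replace 1 with (eps * (1 / eps)) by (field; lra).
    apply Rmult_lt_compat_l; lra. }
  assert (HN2 : (2 <= N)%nat) by (apply INR_lt; simpl; lra).
  apply d_k_eps_le; [lia|]. intros E HB HA.
  apply dimH_le_of_Hausdorff_null.
  - assert (HlnN : 0 < ln (INR N)) by (rewrite <- ln_1; apply ln_increasing; lra).
    assert (0 <= ln (INR (r_k k N) + 1) / ln (INR N)).
    { apply Rmult_le_pos; [|left; apply Rinv_0_lt_compat, HlnN].
      apply ln_nonneg. pose proof (pos_INR (r_k k N)). lra. }
    lra.
  - apply (eps_avoiding_Hausdorff_null k eps E N); auto; try lia.
    apply is_rk_r_k. lia.
Qed.
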